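(* Consider the compound Burgers-Korteweg-de Vries equation $$u_t + \alpha u u_x + \beta u^2 u_x + \mu u_{xx} + s u_{xxx} = 0,$$ with real constants $\alpha>0$, $\mu>0$, $s>0$ and $\beta<0$ (so $-s\beta>0$). Let $\varepsilon_1,\varepsilon_2,\varepsilon_3,\varepsilon\in\{1,-1\}$ satisfy the constraint $\varepsilon_1\varepsilon_2\varepsilon_3=1$, and set $$\kappa=\varepsilon_1\,\frac{\alpha}{2|\beta|}\sqrt{\frac{|\beta|}{6s}}-\varepsilon_2\,\frac{\mu}{6s}.$$ Define $$B_0=-\frac{\alpha}{2\beta}-\varepsilon_3\sqrt{\frac{6s}{|\beta|}}\,\frac{\mu}{6s},\qquad B_1=\varepsilon_3\sqrt{\frac{6s}{|\beta|}}\,\kappa,\qquad C_1=2\kappa,$$ $$D_1=i\,\varepsilon\left(\frac{\alpha}{2|\beta|}-\varepsilon_3\,\frac{\mu}{6s}\sqrt{\frac{6s}{|\beta|}}\right),\qquad v=-\frac{\mu^2}{6s}-2s\left[\frac{\alpha}{2|\beta|}\sqrt{\frac{|\beta|}{6s}}-\varepsilon_3\frac{\mu}{6s}\right]^2-\frac{\alpha^2}{4\beta}.$$ Then, for arbitrary $x_0$, $$u(x,t)=B_0+B_1\tanh\big[C_1(x-vt+x_0)\big]+D_1\,\mathrm{sech}\big[C_1(x-vt+x_0)\big]$$ is a (complex) traveling solitary wave solution of the equation, whose real part has a kink profile and whose imaginary part has a bell profile; moreover $B_1^2=-D_1^2$, so that $|B_1|=|D_1|$ (with $D_1$ purely ima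ginary).
   Context: Traveling waves $u(x,t)=u(\xi)$, $\xi=x-vt$, of the equation satisfy (after one integration with zero integration constant) $u''+ru'+au^3+bu^2+cu=0$ with $r=\mu/s$, $a=\beta/(3s)$, $b=\alpha/(2s)$, $c=-v/s$. The solution is sought via the hyperbolic ansatz $u=B_0+B_1\tanh[C_1(x-vt+x_0)]+D_1\,\mathrm{sech}[C_1(x-vt+x_0)]$, whose constants are obtained by substituting into the ODE, writing everything in exponentials $e^{kC_1\xi}$, and equating the coefficients of $e^{kC_1\xi}$, $k=0,\dots,6$, to zero (the only other solutions of that algebraic system have $B_1=D_1=0$, i.e. constant solutions). *)

From Stdlib Require Import Reals.
From Coquelicot Require Import Coquelicot.
Open Scope R_scope.

Definition sech (x : R) : R := / cosh x.

Definition cBKdV_solution (al be mu s : R) (u : R -> R -> C) : Prop :=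
  exists ut ux uxx uxxx : R -> R -> C,
    (forall x t, is_derive (fun t' => u x t') t (ut x t)) /\
    (forall x t, is_derive (fun x' => u x' t) x (ux x t)) /\
    (forall x t, is_derive (fun x' => ux x' t) x (uxx x t)) /\
    (forall x t, is_derive (fun x' => uxx x' t) x (uxxx x t)) /\
    (forall x t,
       (ut x t + RtoC al * u x t * ux x t + RtoC be * (u x t * u x t) * ux x t
        + RtoC mu * uxx x t + RtoC s * uxxx x t)%C = RtoC 0).

Definition kappa (al be mu s e1 e2 : R) : R :=
  e1 * (al / (2 * Rabs be)) * sqrt (Rabs be / (6 * s)) - e2 * (mu / (6 * s)).

Definition B0c (al be mu s e3 : R) : R :=
  - (al / (2 * be)) - e3 * sqrt (6 * s / Rabs be) * (mu / (6 * s)).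

Definition B1c (al be mu s e1 e2 e3 : R) : R :=
  e3 * sqrt (6 * s / Rabs be) * kappa al be mu s e1 e2.

Definition C1c (al be mu s e1 e2 : R) : R := 2 * kappa al be mu s e1 e2.

Definition D1c (al be mu s e3 e : R) : C :=
  (Ci * RtoC (e * (al / (2 * Rabs be) - e3 * (mu / (6 * s)) * sqrt (6 * s / Rabs be))))%C.

Definition vc (al be mu s e3 : R) : R :=
  - (mu ^ 2 / (6 * s))
  - 2 * s * (al / (2 * Rabs be) * sqrt (Rabs be / (6 * s)) - e3 * (mu / (6 * s))) ^ 2
  - al ^ 2 / (4 * be).

Definition u_sol (al be mu s e1 e2 e3 e x0 : R) (x t : R) : C :=
  let z := C1c al be mu s e1 e2 * (x - vc al be mu s e3 * t + x0) in
  (RtoC (B0c al be mu s e3 + B1c al be mu s e1 e2 e3 * tanh z)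
   + D1c al be mu s e3 e * RtoC (sech z))%C.

(* The profile W(y) = B0 + B1 tanh(C1 y) + D1 sech(C1 y) with D1^2 = -B1^2 and C1 = 2 k B1
   solves the Riccati equation W' = k (B1^2 - (W - B0)^2), because tanh' = 1 - tanh^2 = sech^2
   and sech' = -sech tanh.  Whenever W' = P(W) for a quadratic P, every derivative of W is a
   polynomial in W (W'' = P'(W) P(W), W''' = (P'' P(W) + P'(W)^2) P(W)), so for u = W(x - v t + x0)
   the left-hand side of the equation is P(W) Q(W) with Q quadratic, and it vanishes identically
   as soon as the three coefficients of Q do.  For k = e3 sqrt(|beta| / (6 s)) and B1 = e2 B0
   these read k^2 = -beta / (6 s), alpha = 2 mu k - 2 beta B0 and v = 2 mu k B0 + 4 s k^2 B0^2,
   which is how the constants of the wave are chosen. *)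

From Stdlib Require Import Reals Lra.
From Coquelicot Require Import Coquelicot.
Open Scope R_scope.

Lemma is_derive_R_val (f : R -> R) (x l l' : R) :
  is_derive f x l -> l = l' -> is_derive f x l'.
Proof. now intros H <-. Qed.

Lemma is_derive_C_val (f : R -> C) (x : R) (l l' : C) :
  is_derive f x l -> l = l' -> is_derive f x l'.
Proof. now intros H <-. Qed.

Lemma scal_C (r : R) (z : C) : scal r z = (RtoC r * z)%C.
Proof.
  destruct z as [a b]; unfold RtoC, Cmult; cbn; unfold prod_scal; simpl.
  change (scal r a) with (r * a); change (scal r b) with (r * b).
  f_equal; ring.
Qed.

Lemma is_derive_Re (f : R -> C) (x : R) (l : C) :
  is_derive f x l -> is_derive (fun y => Re (f y)) x (Re l).
Proof.
  intros Hf.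
  apply (filterdiff_ext_lin _ (fun y : R => fst (scal y l : C))); [| now intros y].
  apply (filterdiff_comp' f (fun z : C => fst z) x _ _ Hf).
  exact (filterdiff_linear _ is_linear_fst).
Qed.

Lemma is_derive_Im (f : R -> C) (x : R) (l : C) :
  is_derive f x l -> is_derive (fun y => Im (f y)) x (Im l).
Proof.
  intros Hf.
  apply (filterdiff_ext_lin _ (fun y : R => snd (scal y l : C))); [| now intros y].
  apply (filterdiff_comp' f (fun z : C => snd z) x _ _ Hf).
  exact (filterdiff_linear _ is_linear_snd).
Qed.

Lemma is_derive_C (f g : R -> R) (x : R) (l : C) :
  is_derive f x (Re l) -> is_derive g x (Im l) ->
  is_derive (fun y => (f y, g y) : C) x l.
Proof.
  intros Hf Hg; destruct l as [a b].
  apply (filterdiff_ext_lin _ (fun y : R => (scal y a, scal y b))); [| now intros y].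
  apply (filterdiff_comp_2 f g (fun u v => (u, v)) _ _ (fun u v => (u, v)) Hf Hg).
  apply (filterdiff_ext_lin _ (fun t => t)); [| now intros [u v]].
  apply (filterdiff_ext (fun t => t)); [now intros [u v] | apply filterdiff_id].
Qed.

Lemma is_derive_RtoC (f : R -> R) (x l : R) :
  is_derive f x l -> is_derive (fun y => RtoC (f y)) x (RtoC l).
Proof. intros Hf; apply is_derive_C; [exact Hf | exact (is_derive_const 0 x)]. Qed.

Lemma is_derive_Cmult (f g : R -> C) (x : R) (df dg : C) :
  is_derive f x df -> is_derive g x dg ->
  is_derive (fun y => (f y * g y)%C) x (df * g x + f x * dg)%C.
Proof.
  intros Hf Hg.
  pose proof (is_derive_Re _ _ _ Hf) as Hf1; pose proof (is_derive_Im _ _ _ Hf) as Hf2.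
  pose proof (is_derive_Re _ _ _ Hg) as Hg1; pose proof (is_derive_Im _ _ _ Hg) as Hg2.
  apply is_derive_C; eapply is_derive_R_val.
  - exact (is_derive_minus _ _ x _ _ (is_derive_mult _ _ x _ _ Hf1 Hg1 Rmult_comm)
                                    (is_derive_mult _ _ x _ _ Hf2 Hg2 Rmult_comm)).
  - unfold minus, plus, opp, mult, Re, Im; simpl; ring.
  - exact (is_derive_plus _ _ x _ _ (is_derive_mult _ _ x _ _ Hf1 Hg2 Rmult_comm)
                                   (is_derive_mult _ _ x _ _ Hf2 Hg1 Rmult_comm)).
  - unfold plus, mult, Re, Im; simpl; ring.
Qed.

Lemma is_derive_comp_C (f : R -> C) (g : R -> R) (x : R) (df : C) (dg : R) :
  is_derive f (g x) df -> is_derive g x dg ->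
  is_derive (fun y => f (g y)) x (RtoC dg * df)%C.
Proof. intros Hf Hg; rewrite <- scal_C; exact (is_derive_comp f g x df dg Hf Hg). Qed.

Lemma cosh_pos (z : R) : 0 < cosh z.
Proof. unfold cosh; pose proof (exp_pos z); pose proof (exp_pos (- z)); lra. Qed.

Lemma cosh_sqr_sub_sinh_sqr (z : R) : cosh z ^ 2 - sinh z ^ 2 = 1.
Proof.
  unfold cosh, sinh; rewrite exp_Ropp; pose proof (exp_pos z).
  field; apply Rgt_not_eq; lra.
Qed.

Lemma sech_sqr (z : R) : sech z ^ 2 = 1 - tanh z ^ 2.
Proof.
  pose proof (cosh_pos z).
  transitivity ((cosh z ^ 2 - sinh z ^ 2) / cosh z ^ 2).
  - rewrite cosh_sqr_sub_sinh_sqr; unfold sech; field; lra.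
  - unfold tanh; field; lra.
Qed.

Lemma is_derive_tanh (z : R) : is_derive tanh z (1 - tanh z ^ 2).
Proof.
  pose proof (cosh_pos z).
  eapply is_derive_R_val.
  - apply is_derive_div; [apply is_derive_Reals, derivable_pt_lim_sinh
                         | apply is_derive_Reals, derivable_pt_lim_cosh | lra].
  - unfold tanh; field; lra.
Qed.

Lemma is_derive_sech (z : R) : is_derive sech z (- sech z * tanh z).
Proof.
  pose proof (cosh_pos z).
  eapply is_derive_R_val.
  - apply is_derive_inv; [apply is_derive_Reals, derivable_pt_lim_cosh | lra].
  - unfold sech, tanh; field; lra.
Qed.

Definition quadC (a0 a1 a2 : R) (w : C) : C := (RtoC a0 + RtoC a1 * w + RtoC a2 * (w * w))%C.

Definition dquadC (a1 a2 : R) (w : C) : C := (RtoC a1 + RtoC (2 * a2) * w)%C.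

Lemma is_derive_Cconst (c : C) (x : R) : is_derive (fun _ : R => c) x (RtoC 0).
Proof. exact (is_derive_const (K := R_AbsRing) (V := C_R_NormedModule) c x). Qed.

Lemma is_derive_Cplus (f g : R -> C) (x : R) (df dg : C) :
  is_derive f x df -> is_derive g x dg ->
  is_derive (fun y => f y + g y)%C x (df + dg)%C.
Proof. exact (is_derive_plus f g x df dg). Qed.

Lemma is_derive_Cscal (c : C) (f : R -> C) (x : R) (df : C) :
  is_derive f x df -> is_derive (fun y => c * f y)%C x (c * df)%C.
Proof.
  intros Hf; eapply is_derive_C_val.
  - exact (is_derive_Cmult _ _ x _ _ (is_derive_Cconst c x) Hf).
  - cbv beta; ring.
Qed.

Lemma is_derive_quadC (a0 a1 a2 : R) (W : R -> C) (x : R) (dW : C) :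
  is_derive W x dW ->
  is_derive (fun y => quadC a0 a1 a2 (W y)) x (dquadC a1 a2 (W x) * dW)%C.
Proof.
  intros HW; unfold quadC; eapply is_derive_C_val.
  - apply is_derive_Cplus; [apply is_derive_Cplus |];
      [apply is_derive_Cconst | apply is_derive_Cscal, HW
      | apply is_derive_Cscal, is_derive_Cmult; exact HW].
  - cbv beta; unfold dquadC; rewrite RtoC_mult; ring.
Qed.

Lemma is_derive_dquadC (a1 a2 : R) (W : R -> C) (x : R) (dW : C) :
  is_derive W x dW ->
  is_derive (fun y => dquadC a1 a2 (W y)) x (RtoC (2 * a2) * dW)%C.
Proof.
  intros HW; unfold dquadC; eapply is_derive_C_val.
  - apply is_derive_Cplus; [apply is_derive_Cconst | apply is_derive_Cscal, HW].
  - ring.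
Qed.

Lemma is_derive_riccati_second (a0 a1 a2 : R) (W : R -> C) (x : R) :
  (forall y, is_derive W y (quadC a0 a1 a2 (W y))) ->
  is_derive (fun y => dquadC a1 a2 (W y) * quadC a0 a1 a2 (W y))%C x
    ((RtoC (2 * a2) * quadC a0 a1 a2 (W x) + dquadC a1 a2 (W x) * dquadC a1 a2 (W x))
     * quadC a0 a1 a2 (W x))%C.
Proof.
  intros HW; eapply is_derive_C_val.
  - apply is_derive_Cmult; [apply is_derive_dquadC | apply is_derive_quadC]; apply HW.
  - cbv beta; ring.
Qed.

Lemma is_derive_wave_x (F : R -> C) (dF : C) (v x0 x t : R) :
  is_derive F (x - v * t + x0) dF -> is_derive (fun x' => F (x' - v * t + x0)) x dF.
Proof.
  intros HF; eapply is_derive_C_val.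
  - apply (is_derive_comp_C F (fun x' => x' - v * t + x0) x dF 1);
      [exact HF | auto_derive; [trivial | ring]].
  - ring.
Qed.

Lemma is_derive_wave_t (F : R -> C) (dF : C) (v x0 x t : R) :
  is_derive F (x - v * t + x0) dF ->
  is_derive (fun t' => F (x - v * t' + x0)) t (RtoC (- v) * dF)%C.
Proof.
  intros HF; apply (is_derive_comp_C F (fun t' => x - v * t' + x0) t dF (- v));
    [exact HF | auto_derive; [trivial | ring]].
Qed.

Lemma riccati_wave_cBKdV (al be mu s v x0 a0 a1 a2 : R) (W : R -> C) :
  (forall y, is_derive W y (quadC a0 a1 a2 (W y))) ->
  be = - 6 * s * a2 ^ 2 ->
  al = - 2 * mu * a2 - 6 * s * a1 * a2 ->
  v = mu * a1 + s * a1 ^ 2 + 2 * s * a0 * a2 ->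
  cBKdV_solution al be mu s (fun x t => W (x - v * t + x0)).
Proof.
  intros HW Hbe Hal Hv.
  set (P y := quadC a0 a1 a2 (W y)); set (dP y := dquadC a1 a2 (W y)).
  exists (fun x t => RtoC (- v) * P (x - v * t + x0)%R)%C,
    (fun x t => P (x - v * t + x0)%R),
    (fun x t => dP (x - v * t + x0)%R * P (x - v * t + x0)%R)%C,
    (fun x t => (RtoC (2 * a2) * P (x - v * t + x0)%R
                 + dP (x - v * t + x0)%R * dP (x - v * t + x0)%R) * P (x - v * t + x0)%R)%C.
  split; [| split; [| split; [| split]]]; intros x t.
  - exact (is_derive_wave_t _ _ v x0 x t (HW _)).
  - exact (is_derive_wave_x _ _ v x0 x t (HW _)).
  - exact (is_derive_wave_x _ _ v x0 x t (is_derive_quadC _ _ _ _ _ _ (HW _))).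
  - exact (is_derive_wave_x _ _ v x0 x t (is_derive_riccati_second _ _ _ _ _ HW)).
  - unfold P, dP, quadC, dquadC; generalize (W (x - v * t + x0)) as w; intros w.
    subst al be v; destruct w as [p q].
    (* Componentwise, since [ring] on C treats [RtoC] of compound terms as atoms. *)
    apply injective_projections; simpl; ring.
Qed.

Definition tanh_sech_wave (B0 B1 C1 : R) (D1 : C) (y : R) : C :=
  (RtoC (B0 + B1 * tanh (C1 * y)) + D1 * RtoC (sech (C1 * y)))%C.

Lemma is_derive_tanh_sech_wave (B0 B1 C1 : R) (D1 : C) (y : R) :
  is_derive (tanh_sech_wave B0 B1 C1 D1) y
    (RtoC C1 * (RtoC (B1 * (1 - tanh (C1 * y) ^ 2))
                + D1 * RtoC (- sech (C1 * y) * tanh (C1 * y))))%C.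
Proof.
  apply (is_derive_comp_C (fun z => RtoC (B0 + B1 * tanh z) + D1 * RtoC (sech z))%C
           (fun y => C1 * y)); [| auto_derive; [trivial | ring]].
  apply is_derive_Cplus; apply is_derive_RtoC || apply is_derive_Cscal, is_derive_RtoC.
  - eapply is_derive_R_val.
    + exact (is_derive_plus _ _ _ _ _ (is_derive_const B0 _)
                              (is_derive_scal _ _ B1 _ (is_derive_tanh _))).
    + unfold plus, zero; simpl; ring.
  - apply is_derive_sech.
Qed.

Lemma tanh_sech_wave_riccati (B0 B1 C1 k : R) (D1 : C) (y : R) :
  C1 = 2 * k * B1 -> (D1 * D1 = - (RtoC B1 * RtoC B1))%C ->
  is_derive (tanh_sech_wave B0 B1 C1 D1) y
    (quadC (k * (B1 ^ 2 - B0 ^ 2)) (2 * k * B0) (- k) (tanh_sech_wave B0 B1 C1 D1 y)).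
Proof.
  intros -> HD; eapply is_derive_C_val; [apply is_derive_tanh_sech_wave |].
  pose proof (sech_sqr (2 * k * B1 * y)) as HS.
  unfold tanh_sech_wave, quadC; revert HS.
  generalize (tanh (2 * k * B1 * y)) (sech (2 * k * B1 * y)); intros T S HS.
  assert (HS' : (RtoC S * RtoC S + RtoC T * RtoC T = 1)%C).
  { rewrite <- !RtoC_mult, <- RtoC_plus; f_equal; nra. }
  repeat progress rewrite ?RtoC_plus, ?RtoC_minus, ?RtoC_mult, ?RtoC_opp, ?RtoC_pow.
  (* The two sides differ by k B1^2 (1 - sech^2 - tanh^2) + k sech^2 (D1^2 + B1^2). *)
  match goal with |- _ = ?rhs =>
    transitivity (rhs + RtoC k * (RtoC B1 * RtoC B1) * (1 - (RtoC S * RtoC S + RtoC T * RtoC T))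
                  + RtoC k * (RtoC S * RtoC S) * (D1 * D1 + RtoC B1 * RtoC B1))%C end.
  - ring.
  - rewrite HS', HD; ring.
Qed.

Lemma Re_tanh_sech_wave (B0 B1 C1 : R) (D1 : C) (y : R) :
  Re D1 = 0 -> Re (tanh_sech_wave B0 B1 C1 D1 y) = B0 + B1 * tanh (C1 * y).
Proof. destruct D1 as [a b]; simpl; intros ->; unfold tanh_sech_wave; simpl; ring. Qed.

Lemma Im_tanh_sech_wave (B0 B1 C1 : R) (D1 : C) (y : R) :
  Im (tanh_sech_wave B0 B1 C1 D1 y) = Im D1 * sech (C1 * y).
Proof. destruct D1; unfold tanh_sech_wave; simpl; ring. Qed.

Lemma Rabs_sign (e : R) : e = 1 \/ e = -1 -> Rabs e = 1.
Proof. intros [-> | ->]; [apply Rabs_R1 | rewrite Rabs_left; lra]. Qed.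

Lemma sign_prod (e1 e2 e3 : R) :
  e1 = 1 \/ e1 = -1 -> e2 = 1 \/ e2 = -1 -> e3 = 1 \/ e3 = -1 ->
  e1 * e2 * e3 = 1 -> e1 * e3 = e2.
Proof. intros [-> | ->] [-> | ->] [-> | ->]; lra. Qed.

Lemma neg_eq_sqr (be s : R) :
  be < 0 -> 0 < s -> be = - (6 * s * sqrt (Rabs be / (6 * s)) ^ 2).
Proof.
  intros hbe hs; rewrite (Rabs_left be hbe), <- Rsqr_pow2, Rsqr_sqrt.
  - field; lra.
  - apply Rdiv_le_0_compat; lra.
Qed.

Definition kc (be s e3 : R) : R := e3 * sqrt (Rabs be / (6 * s)).

Section Constants.

Variables (al be mu s r e1 e2 e3 e : R).
Hypotheses (hs : 0 < s) (hr : 0 < r) (hbe : be = - (6 * s * r ^ 2)).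

Lemma Rabs_be : Rabs be = 6 * s * r ^ 2.
Proof. rewrite hbe, Rabs_Ropp; apply Rabs_pos_eq; nra. Qed.

Lemma sqrt_be_s : sqrt (Rabs be / (6 * s)) = r.
Proof.
  rewrite Rabs_be; replace (6 * s * r ^ 2 / (6 * s)) with (r ^ 2) by (field; lra).
  apply sqrt_pow2; lra.
Qed.

Lemma sqrt_s_be : sqrt (6 * s / Rabs be) = / r.
Proof.
  rewrite <- sqrt_be_s, <- sqrt_inv; f_equal.
  rewrite Rabs_be; field; split; lra.
Qed.

Lemma kc_eq : kc be s e3 = e3 * r.
Proof. unfold kc; rewrite sqrt_be_s; reflexivity. Qed.

Lemma B1c_eq : e1 * e3 = e2 -> B1c al be mu s e1 e2 e3 = e2 * B0c al be mu s e3.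
Proof.
  intros <-; unfold B1c, kappa, B0c.
  rewrite sqrt_be_s, sqrt_s_be, Rabs_be, hbe; field; split; lra.
Qed.

Lemma C1c_eq :
  e3 = 1 \/ e3 = -1 -> C1c al be mu s e1 e2 = 2 * kc be s e3 * B1c al be mu s e1 e2 e3.
Proof.
  intros he3; unfold C1c, B1c; rewrite kc_eq, sqrt_s_be.
  destruct he3 as [-> | ->]; field; lra.
Qed.

Lemma D1c_eq : D1c al be mu s e3 e = (Ci * RtoC (e * B0c al be mu s e3))%C.
Proof.
  unfold D1c, B0c; rewrite Rabs_be, hbe; do 3 f_equal.
  field; split; lra.
Qed.

Lemma be_riccati : e3 = 1 \/ e3 = -1 -> be = - 6 * s * (- kc be s e3) ^ 2.
Proof. intros he3; rewrite kc_eq, hbe; destruct he3 as [-> | ->]; ring. Qed.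

Lemma al_riccati :
  e3 = 1 \/ e3 = -1 ->
  al = - 2 * mu * (- kc be s e3) - 6 * s * (2 * kc be s e3 * B0c al be mu s e3) * (- kc be s e3).
Proof.
  intros he3; unfold B0c; rewrite kc_eq, sqrt_s_be, hbe.
  destruct he3 as [-> | ->]; field; split; lra.
Qed.

Lemma vc_riccati :
  e1 * e3 = e2 -> e2 = 1 \/ e2 = -1 -> e3 = 1 \/ e3 = -1 ->
  let k := kc be s e3 in
  let B0 := B0c al be mu s e3 in
  let B1 := B1c al be mu s e1 e2 e3 in
  vc al be mu s e3
  = mu * (2 * k * B0) + s * (2 * k * B0) ^ 2 + 2 * s * (k * (B1 ^ 2 - B0 ^ 2)) * (- k).
Proof.
  intros he13 he2 he3 k B0 B1; unfold B1; rewrite B1c_eq by exact he13.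
  unfold k, B0, vc, B0c; rewrite kc_eq, sqrt_be_s, sqrt_s_be, Rabs_be, hbe.
  destruct he2 as [-> | ->], he3 as [-> | ->]; field; split; lra.
Qed.

Lemma D1c_sqr :
  e1 * e3 = e2 -> e2 = 1 \/ e2 = -1 -> e = 1 \/ e = -1 ->
  (D1c al be mu s e3 e * D1c al be mu s e3 e
   = - (RtoC (B1c al be mu s e1 e2 e3) * RtoC (B1c al be mu s e1 e2 e3)))%C.
Proof.
  intros he13 he2 he; rewrite D1c_eq, B1c_eq by exact he13.
  destruct he2 as [-> | ->], he as [-> | ->]; apply injective_projections; simpl; ring.
Qed.

Lemma Cmod_D1c :
  e1 * e3 = e2 -> e2 = 1 \/ e2 = -1 -> e = 1 \/ e = -1 ->
  Cmod (D1c al be mu s e3 e) = Rabs (B1c al be mu s e1 e2 e3).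
Proof.
  intros he13 he2 he; rewrite D1c_eq, B1c_eq, Cmod_mult, Cmod_Ci, Cmod_R, !Rabs_mult by exact he13.
  rewrite (Rabs_sign e2), (Rabs_sign e) by assumption; ring.
Qed.

End Constants.


Theorem mainTheorem1 (al be mu s : R) (e1 e2 e3 e x0 : R)
  (hal : 0 < al) (hmu : 0 < mu) (hs : 0 < s) (hbe : be < 0)
  (he1 : e1 = 1 \/ e1 = -1) (he2 : e2 = 1 \/ e2 = -1)
  (he3 : e3 = 1 \/ e3 = -1) (he : e = 1 \/ e = -1)
  (hprod : e1 * e2 * e3 = 1) :
  let B0 := B0c al be mu s e3 in
  let B1 := B1c al be mu s e1 e2 e3 in
  let C1 := C1c al be mu s e1 e2 in
  let D1 := D1c al be mu s e3 e in
  let v := vc al be mu s e3 in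
  let u := u_sol al be mu s e1 e2 e3 e x0 in
  (* u is a (complex) traveling-wave solution of the compound Burgers-KdV equation *)
  cBKdV_solution al be mu s u /\
  (* real part: kink profile B0 + B1 tanh; imaginary part: bell profile Im(D1) sech *)
  (forall x t, Re (u x t) = B0 + B1 * tanh (C1 * (x - v * t + x0))) /\
  (forall x t, Im (u x t) = Im D1 * sech (C1 * (x - v * t + x0))) /\
  (* D1 is purely imaginary, B1^2 = -D1^2 and |B1| = |D1| *)
  Re D1 = 0 /\
  (RtoC B1 * RtoC B1 = - (D1 * D1))%C /\
  Rabs B1 = Cmod D1.
Proof.
  intros B0 B1 C1 D1 v u.
  set (r := sqrt (Rabs be / (6 * s))).
  assert (hr : 0 < r) by (apply sqrt_lt_R0, Rdiv_lt_0_compat; [apply Rabs_pos_lt |]; lra).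
  pose proof (neg_eq_sqr be s hbe hs) as hber; fold r in hber.
  pose proof (sign_prod e1 e2 e3 he1 he2 he3 hprod) as he13.
  assert (HD : (D1 * D1 = - (RtoC B1 * RtoC B1))%C) by (apply D1c_sqr with (r := r); assumption).
  assert (hReD1 : Re D1 = 0)
    by (unfold D1; rewrite D1c_eq with (r := r) by assumption; simpl; ring).
  set (k := kc be s e3).
  split; [| split; [| split; [| split; [| split]]]].
  - apply (riccati_wave_cBKdV al be mu s v x0 (k * (B1 ^ 2 - B0 ^ 2)) (2 * k * B0) (- k)
             (tanh_sech_wave B0 B1 C1 D1)).
    + intros y; apply tanh_sech_wave_riccati; [apply C1c_eq with (r := r) | exact HD]; assumption.
    + apply be_riccati with (r := r); assumption.
    + apply al_riccati with (r := r); assumption.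
    + apply vc_riccati with (r := r); assumption.
  - intros x t; apply Re_tanh_sech_wave, hReD1.
  - intros x t; apply Im_tanh_sech_wave.
  - exact hReD1.
  - rewrite HD; ring.
  - symmetry; apply Cmod_D1c with (r := r); assumption.
Qed.
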